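(* The hybrid evaluator $IIH\mathbin{\Diamond}III$ and the uniform evaluator $IIS$ are one-step equivalent: for every term $M$ they produce the same evaluation sequence (in particular they are equal as partial functions). Moreover $IIS = rb\circ III$ where $rb$ is the readback evaluator given by $rb(x)=x$, $rb(\lambda x.B)=\lambda x.B$, and $rb(MN)=M'N'$ if $rb(M)=M'$ and $rb(III(N))=N'$.
   Context: Terms: $\Lambda ::= x\mid\lambda x.\Lambda\mid\Lambda\Lambda$; $[N/x]B$ is capture-avoiding substitution. An evaluator is a partial function $\Lambda\rightharpoonup\Lambda$ defined by inference rules, undefined (divergent) where no finite derivation exists; $\mathrm{id}$ is the identity. Eval-apply template: given evaluators $la,op_1,ar_1,op_2,ar_2$ (possibly $ea$ itself), $ea$ is defined by (var) $ea(x)=x$; (abs) $ea(\lambda x.B)=\lambda x.B'$ if $la(B)=B'$; (con) $ea(MN)=B'$ if $op_1(M)=\lambda x.B$, $ar_1(N)=N'$, $ea([N'/x]B)=B'$; (neu) $ea(MN)=M''N'$ if $op_1(M)=M'$, $M'$ not an abstraction, $op_2(M')=M''$, $ar_2(N)=N'$. Premises are evaluated left to right; the evaluation sequence is the sequence of reduction steps of the whole term given by the (con) contractions (including those inside subsidiary calls) in in-order traversal of the derivation. Uniform evaluator $XYZ\in\{I,S\}^3$: $op_1=ea$, $op_2=\mathrm{id}$, and $la$, $ar_1$, $ar_2$ equal to $ea$ itself when the letter is $S$ and $\mathrm{id}$ when it is $I$ ($III$ is call-by-name). Hybrid evaluator $X_1X_2X_3\mathbin{\Diamond}Y_1Y_2Y_3$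 ($X_i\in\{I,S,H\}$): with subsidiary $su$ the uniform evaluator $Y_1Y_2Y_3$, it is the instance $hy$ of the template with $op_1=su$, $op_2=hy$, and $la$, $ar_1$, $ar_2$ equal to $\mathrm{id}$, $su$, or $hy$ according as $X_1$, $X_2$, $X_3$ is $I$, $S$, or $H$. The evaluation sequence of a composition $rb\circ e$ is that of $e$ followed by that of $rb$ on the result. *)

(* Lambda terms in de Bruijn notation (terms up to alpha). *)
From Stdlib Require Import List.
Import ListNotations.

Inductive term : Type :=
| Var : nat -> term
| Lam : term -> term
| App : term -> term -> term.

Fixpoint lift (k : nat) (t : term) : term :=
  match t with
  | Var n => if Nat.ltb n k then Var n else Var (S n)
  | Lam b => Lam (lift (S k) b)
  | App m n => App (lift k m) (lift k n)
  end.

(* capture-avoiding substitution [u/k]t, removing the binder k *)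
Fixpoint subst (k : nat) (u : term) (t : term) : term :=
  match t with
  | Var n => match Nat.compare n k with
             | Lt => Var n
             | Eq => u
             | Gt => Var (pred n)
             end
  | Lam b => Lam (subst (S k) (lift 0 u) b)
  | App m n => App (subst k u m) (subst k u n)
  end.

(* [N/x]B where B is the body of lambda x.B *)
Definition beta (N B : term) : term := subst 0 N B.

Definition is_abs (t : term) : Prop :=
  match t with Lam _ => True | _ => False end.

(* A one-hole context: the whole term as a function of the subterm
   currently being evaluated. *)
Definition ctx := term -> term.

(* A reduction step of the whole term: (before, after). *)
Definition step := (term * term)%type.

(* An evaluator with evaluation sequences: ev C M M' s means that the
   evaluator maps M to M' (finite derivation), where M sits in the
   whole-term context C, and s is the sequence of whole-term reduction steps. *)
Definition evaluator := ctx -> term -> term -> list step -> Prop.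

Inductive kind : Type := KId | KSelf | KSub.

(* The eval-apply template.  [sub] is an externally given (subsidiary)
   evaluator; KSelf refers to the evaluator being defined; KId is id
   (no steps). Premises are evaluated left to right. *)
Inductive tmpl (sub : evaluator) (la op1 ar1 op2 ar2 : kind)
  : ctx -> term -> term -> list step -> Prop :=
| t_var : forall C n, tmpl sub la op1 ar1 op2 ar2 C (Var n) (Var n) nil
| t_abs : forall C B B' s,
    call sub la op1 ar1 op2 ar2 la (fun t => C (Lam t)) B B' s ->
    tmpl sub la op1 ar1 op2 ar2 C (Lam B) (Lam B') s
| t_con : forall C M N B N' R s1 s2 s3,
    call sub la op1 ar1 op2 ar2 op1 (fun t => C (App t N)) M (Lam B) s1 ->
    call sub la op1 ar1 op2 ar2 ar1 (fun t => C (App (Lam B) t)) N N' s2 ->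
    tmpl sub la op1 ar1 op2 ar2 C (beta N' B) R s3 ->
    tmpl sub la op1 ar1 op2 ar2 C (App M N) R
      (s1 ++ s2 ++ (C (App (Lam B) N'), C (beta N' B)) :: s3)
| t_neu : forall C M N M' M'' N' s1 s2 s3,
    call sub la op1 ar1 op2 ar2 op1 (fun t => C (App t N)) M M' s1 ->
    ~ is_abs M' ->
    call sub la op1 ar1 op2 ar2 op2 (fun t => C (App t N)) M' M'' s2 ->
    call sub la op1 ar1 op2 ar2 ar2 (fun t => C (App M'' t)) N N' s3 ->
    tmpl sub la op1 ar1 op2 ar2 C (App M N) (App M'' N') (s1 ++ s2 ++ s3)
with call (sub : evaluator) (la op1 ar1 op2 ar2 : kind)
  : kind -> ctx -> term -> term -> list step -> Prop :=
| c_id : forall C M, call sub la op1 ar1 op2 ar2 KId C M M nil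
| c_self : forall C M M' s,
    tmpl sub la op1 ar1 op2 ar2 C M M' s ->
    call sub la op1 ar1 op2 ar2 KSelf C M M' s
| c_sub : forall C M M' s,
    sub C M M' s -> call sub la op1 ar1 op2 ar2 KSub C M M' s.

Definition noEval : evaluator := fun _ _ _ _ => False.

Inductive uletter : Type := UI | US.
Definition ukind (l : uletter) : kind :=
  match l with UI => KId | US => KSelf end.

Definition uniform (X Y Z : uletter) : evaluator :=
  tmpl noEval (ukind X) KSelf (ukind Y) KId (ukind Z).

Inductive hletter : Type := HI | HS | HH.
Definition hkind (l : hletter) : kind :=
  match l with HI => KId | HS => KSub | HH => KSelf end.

Definition hybrid (X1 X2 X3 : hletter) (Y1 Y2 Y3 : uletter) : evaluator :=
  tmpl (uniform Y1 Y2 Y3) (hkind X1) KSub (hkind X2) KSelf (hkind X3).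

Inductive readback : evaluator :=
| rb_var : forall C n, readback C (Var n) (Var n) nil
| rb_abs : forall C B, readback C (Lam B) (Lam B) nil
| rb_app : forall C M N M' N1 N' s1 s2 s3,
    readback (fun t => C (App t N)) M M' s1 ->
    uniform UI UI UI (fun t => C (App M' t)) N N1 s2 ->
    readback (fun t => C (App M' t)) N1 N' s3 ->
    readback C (App M N) (App M' N') (s1 ++ s2 ++ s3).

Definition top : ctx := fun t => t.

(* Both IIS and IIH<>III compute a term in two phases: call-by-name to weak
   head normal form, then readback of the arguments of a neutral head, each
   argument again by call-by-name followed by readback.  For IIS this holds
   because call-by-name to an abstraction is already an IIS evaluation; for the
   hybrid because a call-by-name normal form is a call-by-name fixed point,
   so re-evaluating it with IIH costs no steps and coincides with readback.
   Hence both equal rb o III, with the same reduction sequences. *)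

From Stdlib Require Import List.
Import ListNotations.

Scheme tmpl_mind := Induction for tmpl Sort Prop
with call_mind := Induction for call Sort Prop.

Section TemplateInduction.

Variables (sub P : evaluator) (la op1 ar1 op2 ar2 : kind).

(* What a slot of the template contributes once the self-calls are read as [P]. *)
Definition slot (k : kind) : evaluator :=
  match k with
  | KId => fun _ M M' s => M' = M /\ s = []
  | KSelf => P
  | KSub => sub
  end.

Hypothesis P_var : forall C n, P C (Var n) (Var n) [].
Hypothesis P_abs : forall C B B' s,
  slot la (fun t => C (Lam t)) B B' s -> P C (Lam B) (Lam B') s.
Hypothesis P_con : forall C M N B N' R s1 s2 s3,
  slot op1 (fun t => C (App t N)) M (Lam B) s1 ->
  slot ar1 (fun t => C (App (Lam B) t)) N N' s2 ->
  P C (beta N' B) R s3 ->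
  P C (App M N) R (s1 ++ s2 ++ (C (App (Lam B) N'), C (beta N' B)) :: s3).
Hypothesis P_neu : forall C M N M' M'' N' s1 s2 s3,
  slot op1 (fun t => C (App t N)) M M' s1 -> ~ is_abs M' ->
  slot op2 (fun t => C (App t N)) M' M'' s2 ->
  slot ar2 (fun t => C (App M'' t)) N N' s3 ->
  P C (App M N) (App M'' N') (s1 ++ s2 ++ s3).

Lemma tmpl_slot_ind C M M' s : tmpl sub la op1 ar1 op2 ar2 C M M' s -> P C M M' s.
Proof.
  apply (tmpl_mind sub la op1 ar1 op2 ar2 (fun C M M' s _ => P C M M' s)
           (fun k C M M' s _ => slot k C M M' s)); cbn; eauto.
Qed.

End TemplateInduction.

(* The three evaluators of the theorem, with the identity slots compiled away. *)

Inductive cbn : evaluator :=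
| cbn_var : forall C n, cbn C (Var n) (Var n) []
| cbn_abs : forall C B, cbn C (Lam B) (Lam B) []
| cbn_con : forall C M N B R s1 s3,
    cbn (fun t => C (App t N)) M (Lam B) s1 ->
    cbn C (beta N B) R s3 ->
    cbn C (App M N) R (s1 ++ (C (App (Lam B) N), C (beta N B)) :: s3)
| cbn_neu : forall C M N M' s1,
    cbn (fun t => C (App t N)) M M' s1 -> ~ is_abs M' ->
    cbn C (App M N) (App M' N) s1.

Inductive iis : evaluator :=
| iis_var : forall C n, iis C (Var n) (Var n) []
| iis_abs : forall C B, iis C (Lam B) (Lam B) []
| iis_con : forall C M N B R s1 s3,
    iis (fun t => C (App t N)) M (Lam B) s1 ->
    iis C (beta N B) R s3 ->
    iis C (App M N) R (s1 ++ (C (App (Lam B) N), C (beta N B)) :: s3)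
| iis_neu : forall C M N M' N' s1 s3,
    iis (fun t => C (App t N)) M M' s1 -> ~ is_abs M' ->
    iis (fun t => C (App M' t)) N N' s3 ->
    iis C (App M N) (App M' N') (s1 ++ s3).

Inductive iih : evaluator :=
| iih_var : forall C n, iih C (Var n) (Var n) []
| iih_abs : forall C B, iih C (Lam B) (Lam B) []
| iih_con : forall C M N B R s1 s3,
    cbn (fun t => C (App t N)) M (Lam B) s1 ->
    iih C (beta N B) R s3 ->
    iih C (App M N) R (s1 ++ (C (App (Lam B) N), C (beta N B)) :: s3)
| iih_neu : forall C M N M' M'' N' s1 s2 s3,
    cbn (fun t => C (App t N)) M M' s1 -> ~ is_abs M' ->
    iih (fun t => C (App t N)) M' M'' s2 ->
    iih (fun t => C (App M'' t)) N N' s3 ->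
    iih C (App M N) (App M'' N') (s1 ++ s2 ++ s3).

Lemma uniform_III_cbn C M R s : uniform UI UI UI C M R s <-> cbn C M R s.
Proof.
  split.
  - apply tmpl_slot_ind; cbn.
    + constructor.
    + intros C0 B B' s0 [-> ->]; constructor.
    + intros C0 M0 N B N' R0 s1 s2 s3 HM [-> ->] HR; now constructor.
    + intros C0 M0 N M' M'' N' s1 s2 s3 HM HnA [-> ->] [-> ->].
      rewrite app_nil_r; now constructor.
  - induction 1.
    + constructor.
    + apply t_abs, c_id.
    + eapply t_con with (s2 := []); [apply c_self; eassumption | apply c_id | eassumption].
    + rewrite <- (app_nil_r s1), <- (app_nil_l []).
      eapply t_neu; [apply c_self; eassumption | eassumption | apply c_id | apply c_id].
Qed.

Lemma uniform_IIS_iis C M R s : uniform UI UI US C M R s <-> iis C M R s.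
Proof.
  split.
  - apply tmpl_slot_ind; cbn.
    + constructor.
    + intros C0 B B' s0 [-> ->]; constructor.
    + intros C0 M0 N B N' R0 s1 s2 s3 HM [-> ->] HR; now constructor.
    + intros C0 M0 N M' M'' N' s1 s2 s3 HM HnA [-> ->] HN; now constructor.
  - induction 1.
    + constructor.
    + apply t_abs, c_id.
    + eapply t_con with (s2 := []); [apply c_self; eassumption | apply c_id | eassumption].
    + eapply t_neu with (s2 := []); [apply c_self; eassumption | eassumption | apply c_id
                                     | apply c_self; eassumption].
Qed.

Lemma hybrid_IIH_iih C M R s : hybrid HI HI HH UI UI UI C M R s <-> iih C M R s.
Proof.
  split.
  - apply tmpl_slot_ind; cbn.
    + constructor.
    + intros C0 B B' s0 [-> ->]; constructor.
    + intros C0 M0 N B N' R0 s1 s2 s3 HM [-> ->] HR.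
      apply uniform_III_cbn in HM; now constructor.
    + intros C0 M0 N M' M'' N' s1 s2 s3 HM HnA HM' HN.
      apply uniform_III_cbn in HM; econstructor; eassumption.
  - induction 1.
    + constructor.
    + apply t_abs, c_id.
    + eapply t_con with (s2 := []); [apply c_sub, uniform_III_cbn; eassumption | apply c_id
                    | eassumption].
    + eapply t_neu; [apply c_sub, uniform_III_cbn; eassumption | eassumption
                    | apply c_self; eassumption | apply c_self; eassumption].
Qed.

Lemma cbn_normal C M V s : cbn C M V s -> forall C', cbn C' V V [].
Proof.
  induction 1; intros C'; try constructor; auto.
Qed.

Lemma cbn_det C M R1 s1 : cbn C M R1 s1 ->
  forall R2 s2, cbn C M R2 s2 -> R1 = R2 /\ s1 = s2.
Proof.
  induction 1 as [| | C M N B R s1 s3 _ IHM _ IHR | C M N M' s1 _ IHM HnA];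
    intros R2 s2 H2;
    inversion H2 as [| | C' M0 N0 B' R' t1 t3 HM' HR' | C' M0 N0 M'' t1 HM' HnA'];
    subst; auto.
  - destruct (IHM _ _ HM') as [[= ->] ->].
    now destruct (IHR _ _ HR') as [-> ->].
  - destruct (IHM _ _ HM') as [<- _]; contradiction HnA'; exact I.
  - destruct (IHM _ _ HM') as [-> _]; contradiction HnA; exact I.
  - now destruct (IHM _ _ HM') as [-> ->].
Qed.

Lemma iis_of_cbn_abs C M V s : cbn C M V s -> is_abs V -> iis C M V s.
Proof.
  induction 1; intros HV; cbn in HV; try contradiction.
  - constructor.
  - constructor; [apply IHcbn1; exact I | auto].
Qed.

Lemma readback_abs_inv C M B s : readback C M (Lam B) s -> M = Lam B /\ s = [].
Proof. now inversion 1. Qed.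

Lemma readback_is_abs C M R s : readback C M R s -> is_abs M <-> is_abs R.
Proof. now destruct 1. Qed.

Definition readback_after_cbn (C : ctx) (M R : term) (s : list step) : Prop :=
  exists V s1 s2, cbn C M V s1 /\ readback C V R s2 /\ s = s1 ++ s2.

Lemma readback_after_cbn_var C n : readback_after_cbn C (Var n) (Var n) [].
Proof. exists (Var n), [], []; repeat constructor. Qed.

Lemma readback_after_cbn_abs C B : readback_after_cbn C (Lam B) (Lam B) [].
Proof. exists (Lam B), [], []; repeat constructor. Qed.

Lemma readback_after_cbn_con C M N B R s1 s3 :
  cbn (fun t => C (App t N)) M (Lam B) s1 ->
  readback_after_cbn C (beta N B) R s3 ->
  readback_after_cbn C (App M N) R (s1 ++ (C (App (Lam B) N), C (beta N B)) :: s3).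
Proof.
  intros HM (V & t1 & t2 & HV & Hrb & ->).
  exists V, (s1 ++ (C (App (Lam B) N), C (beta N B)) :: t1), t2.
  repeat split; [now constructor | assumption | now rewrite <- app_assoc].
Qed.

Lemma readback_after_cbn_neu C M N M' M'' N' s1 s2 s3 :
  cbn (fun t => C (App t N)) M M' s1 -> ~ is_abs M' ->
  readback (fun t => C (App t N)) M' M'' s2 ->
  readback_after_cbn (fun t => C (App M'' t)) N N' s3 ->
  readback_after_cbn C (App M N) (App M'' N') (s1 ++ s2 ++ s3).
Proof.
  intros HM HnA HM' (V & t1 & t2 & HV & Hrb & ->).
  exists (App M' N), s1, (s2 ++ t1 ++ t2).
  split; [now constructor | split; [| reflexivity]].
  eapply rb_app; [eassumption | apply uniform_III_cbn; eassumption | eassumption].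
Qed.

Lemma readback_after_cbn_of_iis C M R s : iis C M R s -> readback_after_cbn C M R s.
Proof.
  induction 1 as [| | C M N B R s1 s3 _ IHM _ IHR | C M N M' N' s1 s3 _ IHM HnA _ IHN].
  - apply readback_after_cbn_var.
  - apply readback_after_cbn_abs.
  - destruct IHM as (V & t1 & t2 & HV & Hrb & ->).
    destruct (readback_abs_inv _ _ _ _ Hrb) as [-> ->].
    rewrite app_nil_r; now apply readback_after_cbn_con.
  - destruct IHM as (V & t1 & t2 & HV & Hrb & ->).
    assert (HnV : ~ is_abs V) by now rewrite (readback_is_abs _ _ _ _ Hrb).
    rewrite <- app_assoc; eapply readback_after_cbn_neu; eassumption.
Qed.

Lemma readback_after_cbn_of_iih C M R s : iih C M R s -> readback_after_cbn C M R s.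
Proof.
  induction 1 as [| | C M N B R s1 s3 HM _ IHR
                  | C M N M' M'' N' s1 s2 s3 HM HnA _ IHM' _ IHN].
  - apply readback_after_cbn_var.
  - apply readback_after_cbn_abs.
  - now apply readback_after_cbn_con.
  - destruct IHM' as (V & t1 & t2 & HV & Hrb & ->).
    destruct (cbn_det _ _ _ _ HV _ _ (cbn_normal _ _ _ _ HM _)) as [-> ->].
    eapply readback_after_cbn_neu; eassumption.
Qed.

Lemma iis_iih_con C M N B R s1 s3 :
  cbn (fun t => C (App t N)) M (Lam B) s1 ->
  iis C (beta N B) R s3 /\ iih C (beta N B) R s3 ->
  iis C (App M N) R (s1 ++ (C (App (Lam B) N), C (beta N B)) :: s3) /\
  iih C (App M N) R (s1 ++ (C (App (Lam B) N), C (beta N B)) :: s3).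
Proof.
  intros HM [HRs HRh]; split; constructor; auto.
  now apply iis_of_cbn_abs.
Qed.

Lemma readback_cbn_iis_iih C V R s2 : readback C V R s2 ->
  forall M s1, cbn C M V s1 -> iis C M R (s1 ++ s2) /\ iih C M R (s1 ++ s2).
Proof.
  induction 1 as [C n | C B | C M' N M'' N1 N' s1' s2' s3' HM' IHM' HN1 _ IHN];
    intros M s1 Hc.
  - remember (Var n) as V eqn:EV.
    induction Hc; subst; try discriminate; rewrite ?app_nil_r in *.
    + split; constructor.
    + apply iis_iih_con; auto.
  - remember (Lam B) as V eqn:EV.
    induction Hc; subst; try discriminate; rewrite ?app_nil_r in *.
    + split; constructor.
    + apply iis_iih_con; auto.
  - remember (App M' N) as V eqn:EV.
    induction Hc as [| | C0 M0 N0 B R s1 s3 HM _ _ IHR | C0 M0 N0 M0' s1 HM HnA];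
      subst; try discriminate.
    + rewrite <- app_assoc; apply iis_iih_con; auto.
    + injection EV as -> ->.
      apply uniform_III_cbn in HN1.
      destruct (IHN _ _ HN1) as [HNs HNh].
      assert (HnA'' : ~ is_abs M'') by now rewrite <- (readback_is_abs _ _ _ _ HM').
      split.
      * rewrite app_assoc; constructor; [apply IHM'|..]; assumption.
      * econstructor; [eassumption | assumption | | eassumption].
        exact (proj2 (IHM' _ _ (cbn_normal _ _ _ _ HM _))).
Qed.

Lemma iis_readback_after_cbn C M R s : iis C M R s <-> readback_after_cbn C M R s.
Proof.
  split; [apply readback_after_cbn_of_iis|].
  intros (V & s1 & s2 & HV & Hrb & ->).
  exact (proj1 (readback_cbn_iis_iih _ _ _ _ Hrb _ _ HV)).
Qed.

Lemma iih_readback_after_cbn C M R s : iih C M R s <-> readback_after_cbn C M R s.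
Proof.
  split; [apply readback_after_cbn_of_iih|].
  intros (V & s1 & s2 & HV & Hrb & ->).
  exact (proj2 (readback_cbn_iis_iih _ _ _ _ Hrb _ _ HV)).
Qed.

Theorem mainTheorem7 :
  (forall (M R : term) (s : list step),
      hybrid HI HI HH UI UI UI top M R s <-> uniform UI UI US top M R s)
  /\
  (forall (M R : term) (s : list step),
      uniform UI UI US top M R s <->
      exists (M' : term) (s1 s2 : list step),
        uniform UI UI UI top M M' s1 /\ readback top M' R s2 /\ s = s1 ++ s2).
Proof.
  split; intros M R s.
  - rewrite hybrid_IIH_iih, uniform_IIS_iis.
    now rewrite iih_readback_after_cbn, iis_readback_after_cbn.
  - rewrite uniform_IIS_iis, iis_readback_after_cbn; unfold readback_after_cbn.
    now setoid_rewrite uniform_III_cbn.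
Qed.
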